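(* Let $m\geq 2$, $\mathcal M=\{1,\dots,m\}$, $X_{\mathcal M}=(X_1,\dots,X_m)$ a discrete memoryless multiple source with finite alphabets, and $\mathcal A\subseteq\mathcal M$ with $|\mathcal A|\geq 2$. Then $C_{\mathrm{SK}}(\mathcal A)=I(\mathcal A)$ if and only if there exist $k$ with $2\leq k\leq|\mathcal A|$, a tuple $(\mathcal C_1,\dots,\mathcal C_k)\in\mathscr P_k(\mathcal A)$, and a rate tuple $R_{\mathcal M}\in\mathscr R(\mathcal A)$ such that $\mathrm{SW}(R_{\mathcal M},\mathcal C_i^c)=0$ for all $i\in\{1,\dots,k\}$.
   Context: Define $\mathscr B(\mathcal A):=\{\mathcal B\subsetneq\mathcal M:\ \mathcal B\neq\emptyset,\ \mathcal B\not\supseteq\mathcal A\}$. Let $h(\mathcal B):=H(X_{\mathcal B}\mid X_{\mathcal B^c})$ for $\mathcal B\subseteq\mathcal M$ (complements in $\mathcal M$; $h(\mathcal M)=H(X_{\mathcal M})$). For $R_{\mathcal M}=(R_1,\dots,R_m)\in\mathbb R^m$ let $\mathrm{SW}(R_{\mathcal M},\mathcal B):=\sum_{j\in\mathcal B}R_j-h(\mathcal B)$, and $\mathscr R(\mathcal A):=\{R_{\mathcal M}\in\mathbb R^m:\ \mathrm{SW}(R_{\mathcal M},\mathcal B)\geq 0\ \forall\,\mathcal B\in\mathscr B(\mathcal A)\}$. Let $R_{\mathrm{CO}}(\mathcal A):=\min_{R_{\mathcal M}\in\mathscr R(\mathcal A)}\sum_i R_i$ and $C_{\mathrm{SK}}(\mathcal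 A):=H(X_{\mathcal M})-R_{\mathrm{CO}}(\mathcal A)$. For $k\geq2$, $\mathscr P_k(\mathcal A)$ is the set of tuples $(\mathcal C_1,\dots,\mathcal C_k)$ of pairwise disjoint subsets of $\mathcal M$ with union $\mathcal M$ and $\mathcal C_i\cap\mathcal A\neq\emptyset$ for all $i$; $I(\mathcal C_1,\dots,\mathcal C_k):=\frac1{k-1}\big(\sum_{i=1}^kH(X_{\mathcal C_i})-H(X_{\mathcal M})\big)$; and $I(\mathcal A):=\min\{I(\mathcal C_1,\dots,\mathcal C_k):2\leq k\leq|\mathcal A|,(\mathcal C_1,\dots,\mathcal C_k)\in\mathscr P_k(\mathcal A)\}$. *)

From mathcomp Require Import all_boot all_order all_algebra.
From mathcomp Require Import all_classical all_reals all_analysis.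
Set Implicit Arguments. Unset Strict Implicit. Unset Printing Implicit Defensive.
Import Order.TTheory GRing.Theory Num.Theory.
Local Open Scope ring_scope.

Section Defs.
Variables (R : realType) (m : nat) (Omega : finType) (p : Omega -> R).
Variables (Alph : 'I_m -> finType) (X : forall i : 'I_m, Omega -> Alph i).

(* The source X_M = (X_1,...,X_m) is given as finite-valued random variables
   X i : Omega -> Alph i on a finite probability space (Omega, p); this is
   equivalent to giving a joint pmf on the product of the finite alphabets. *)

Definition log2 (x : R) : R := ln x / ln 2.

Definition margprob (B : {set 'I_m}) (w : Omega) : R :=
  \sum_(w' : Omega | [forall i in B, X i w' == X i w]) p w'.

Definition entropy (B : {set 'I_m}) : R :=
  - \sum_(w : Omega) p w * log2 (margprob B w).

Definition condentropy (B C : {set 'I_m}) : R := entropy (B :|: C) - entropy C.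

Definition h (B : {set 'I_m}) : R := condentropy B (~: B).

Definition SW (Rt : 'I_m -> R) (B : {set 'I_m}) : R := \sum_(j in B) Rt j - h B.

Definition in_scrB (A B : {set 'I_m}) : bool :=
  [&& B != finset.set0, B \proper [set: 'I_m] & ~~ (A \subset B)].

Definition in_scrR (A : {set 'I_m}) (Rt : 'I_m -> R) : Prop :=
  forall B : {set 'I_m}, in_scrB A B -> 0 <= SW Rt B.

(* R_CO(A) = min over scrR(A) of the sum rate (taken as infimum) *)
Definition R_CO (A : {set 'I_m}) : R :=
  inf [set s | exists Rt : 'I_m -> R, in_scrR A Rt /\ s = \sum_i Rt i].

Definition C_SK (A : {set 'I_m}) : R := entropy [set: 'I_m] - R_CO A.

Definition in_scrP (A : {set 'I_m}) (k : nat) (C : 'I_k -> {set 'I_m}) : Prop :=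
  [/\ forall i j : 'I_k, i != j -> [disjoint C i & C j],
      \bigcup_(i < k) C i = [set: 'I_m]
    & forall i : 'I_k, C i :&: A != finset.set0].

Definition Ipart (k : nat) (C : 'I_k -> {set 'I_m}) : R :=
  (\sum_(i < k) entropy (C i) - entropy [set: 'I_m]) / (k.-1)%:R.

(* I(A) = min over 2 <= k <= |A| and partitions (finite, nonempty: taken as infimum) *)
Definition I_A (A : {set 'I_m}) : R :=
  inf [set s | exists (k : nat) (C : 'I_k -> {set 'I_m}),
          [/\ (2 <= k)%N, (k <= #|A|)%N, in_scrP A C & s = Ipart C]].

End Defs.

From mathcomp Require Import all_boot all_order all_algebra.
From mathcomp Require Import all_classical all_reals all_analysis.
From mathcomp Require Import ring lra.
Import Order.TTheory GRing.Theory Num.Theory.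
Import numFieldNormedType.Exports.
Local Open Scope ring_scope.

(* Summing the constraints SW(R, C_i^c) >= 0 over the k blocks of a partition C
   gives (k-1) (sum_j R_j - H(X_M) + I(C)) >= 0, so every admissible rate tuple
   has sum rate at least H(X_M) - I(C); hence C_SK(A) <= I(C) for every C, and
   C_SK(A) <= I(A).  Both infima are minima: I(A) ranges over finitely many
   partitions, and the singleton constraints R_j >= h({j}) make the admissible
   rate tuples of bounded sum rate a compact set.  Taking a minimizing partition
   and a minimizing rate tuple, the sum above equals (k-1) (I(A) - C_SK(A)), so
   C_SK(A) = I(A) exactly when all k constraints SW(R, C_i^c) >= 0 are tight. *)

Lemma sum_partition (T : finType) (V : nmodType) k (C : 'I_k -> {set T})
    (F : T -> V) :
  (forall i j, i != j -> [disjoint C i & C j]) ->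
  \bigcup_(i < k) C i = [set: T] ->
  \sum_(i < k) \sum_(j in C i) F j = \sum_j F j.
Proof.
move=> dis cov; under eq_bigr do rewrite big_mkcond /=.
rewrite exchange_big /=; apply: eq_bigr => j _.
have /bigcupP[i0 _ j_i0] : j \in \bigcup_(i < k) C i by rewrite cov inE.
rewrite (bigD1 i0) //= j_i0 big1 ?addr0 // => i ne.
by rewrite (disjointFl (dis _ _ ne) j_i0).
Qed.

Lemma continuous_row_sum {R : realType} {n} (P : pred 'I_n) :
  continuous (fun v : 'rV[R]_n => \sum_(j | P j) v ord0 j).
Proof.
apply: continuous_big; first exact: add_continuous.
by move=> j _; exact: coord_continuous.
Qed.

Set Implicit Arguments. Unset Strict Implicit. Unset Printing Implicit Defensive.

Section SecretKeyCapacity.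
Variables (R : realType) (m : nat) (Omega : finType) (p : Omega -> R).
Variables (Alph : 'I_m -> finType) (X : forall i : 'I_m, Omega -> Alph i).
Variable A : {set 'I_m}.

Local Notation H := (entropy p X [set: 'I_m]).

Lemma h_setC B : h p X (~: B) = H - entropy p X B.
Proof. by rewrite /h /condentropy finset.setCK finset.setUC finset.setUCr. Qed.

Lemma sum_SW_setC k (C : 'I_k -> {set 'I_m}) (Rt : 'I_m -> R) :
  (2 <= k)%N -> in_scrP A C ->
  \sum_(i < k) SW p X Rt (~: C i) = (k.-1)%:R * (\sum_j Rt j - H + Ipart p X C).
Proof.
case: k C => [|[|n]] // C _ [dis cov _].
have SW_block i : SW p X Rt (~: C i) =
    (\sum_j Rt j - \sum_(j in C i) Rt j) - (H - entropy p X (C i)).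
  rewrite /SW h_setC [in RHS](bigID (mem (C i))) /= addrC addrK.
  by congr (_ - _); apply: eq_bigl => j; rewrite inE.
rewrite (eq_bigr _ (fun i _ => SW_block i)) !sumrB sum_partition //.
rewrite !sumr_const card_ord /Ipart /= mulrDr [_ * (_ / _)]mulrC divfK ?pnatr_eq0 //.
rewrite -[in RHS]mulr_natl; ring.
Qed.

Lemma in_scrB_setC_block k (C : 'I_k -> {set 'I_m}) (i : 'I_k) :
  (2 <= k)%N -> in_scrP A C -> in_scrB A (~: C i).
Proof.
move=> k2 [dis _ meetA].
have /set0Pn[a /setIP[a_Ci aA]] := meetA i.
have /card_gt0P[i'] : (0 < #|[set~ i]|)%N.
  by rewrite cardsC1 card_ord -ltnS prednK // ltnW.
rewrite !inE => ne.
have /set0Pn[b /setIP[b_Ci' _]] := meetA i'.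
apply/and3P; split.
- by apply/set0Pn; exists b; rewrite inE (disjointFr (dis _ _ ne) b_Ci').
- by rewrite properT; apply/eqP => /setP/(_ a); rewrite !inE a_Ci.
- by apply/negP => /fintype.subsetP/(_ a aA); rewrite inE a_Ci.
Qed.

Lemma in_scrB_set1 (j : 'I_m) :
  (2 <= m)%N -> (2 <= #|A|)%N -> in_scrB A [set j].
Proof.
move=> m2 A2; apply/and3P; split.
- by apply/set0Pn; exists j; rewrite inE.
- rewrite properT; apply/eqP => /(congr1 (fun B : {set 'I_m} => #|B|)).
  by rewrite cards1 cardsT card_ord => m1; rewrite -m1 in m2.
- by apply/negP => /subset_leq_card; rewrite cards1; apply/negP; rewrite -ltnNge.
Qed.

Lemma Ipart_le_sum_rates k (C : 'I_k -> {set 'I_m}) (Rt : 'I_m -> R) :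
  (2 <= k)%N -> in_scrP A C -> in_scrR p X A Rt ->
  H - Ipart p X C <= \sum_j Rt j.
Proof.
move=> k2 PC feas.
have : 0 <= \sum_(i < k) SW p X Rt (~: C i).
  by apply: sumr_ge0 => i _; apply/feas/in_scrB_setC_block.
have k1_gt0 : 0 < (k.-1)%:R :> R by rewrite ltr0n -ltnS prednK // ltnW.
by rewrite sum_SW_setC // pmulr_rge0 //; lra.
Qed.

Lemma sum_rates_tight k (C : 'I_k -> {set 'I_m}) (Rt : 'I_m -> R) :
  (2 <= k)%N -> in_scrP A C -> (forall i, SW p X Rt (~: C i) = 0) ->
  \sum_j Rt j = H - Ipart p X C.
Proof.
move=> k2 PC SW0; have k1_neq0 : (k.-1)%:R != 0 :> R.
  by rewrite pnatr_eq0 -lt0n -ltnS prednK // ltnW.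
have := sum_SW_setC Rt k2 PC; rewrite big1 // => /esym/eqP.
by rewrite mulf_eq0 (negbTE k1_neq0) /= => /eqP; lra.
Qed.

Local Notation sum_rates :=
  [set s | exists Rt : 'I_m -> R, in_scrR p X A Rt /\ s = \sum_i Rt i]%classic.
Local Notation partition_values :=
  [set s | exists (k : nat) (C : 'I_k -> {set 'I_m}),
     [/\ (2 <= k)%N, (k <= #|A|)%N, in_scrP A C & s = Ipart p X C]]%classic.

Lemma sum_rates_neq0 : (sum_rates !=set0)%classic.
Proof.
pose c := \sum_(B : {set 'I_m}) `|h p X B|.
have c_ge0 : 0 <= c by apply: sumr_ge0.
have h_le_c B : h p X B <= c.
  by rewrite (le_trans (ler_norm _)) // /c (bigD1 B) //= lerDl sumr_ge0.
exists (\sum_(j : 'I_m) c), (fun _ => c); split => // B /and3P[/set0Pn[j jB] _ _].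
by rewrite /SW subr_ge0 (le_trans (h_le_c B)) // (bigD1 j) //= lerDl sumr_ge0.
Qed.

Lemma C_SK_le_Ipart k (C : 'I_k -> {set 'I_m}) :
  (2 <= k)%N -> in_scrP A C -> C_SK p X A <= Ipart p X C.
Proof.
move=> k2 PC; suff : H - Ipart p X C <= R_CO p X A by rewrite /C_SK; lra.
apply: lb_le_inf; first exact: sum_rates_neq0.
by move=> _ [Rt [feas ->]]; exact: Ipart_le_sum_rates.
Qed.

Lemma I_A_le_Ipart k (C : 'I_k -> {set 'I_m}) :
  (2 <= k)%N -> (k <= #|A|)%N -> in_scrP A C -> I_A p X A <= Ipart p X C.
Proof.
move=> k2 kA PC; apply: ge_inf; last by exists k, C.
by exists (C_SK p X A) => _ [k' [C' [k2' _ PC' ->]]]; exact: C_SK_le_Ipart.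
Qed.

Definition feasible_below (c : R) : set 'rV[R]_m :=
  [set v | in_scrR p X A (fun j => v ord0 j) /\ \sum_j v ord0 j <= c]%classic.

Lemma row_feasible_below (Rt : 'I_m -> R) c :
  in_scrR p X A Rt -> \sum_j Rt j <= c -> feasible_below c (\row_j Rt j).
Proof.
have rowK : (\row_j Rt j) ord0 = Rt by apply/funext => j; rewrite mxE.
by rewrite /feasible_below /= rowK.
Qed.

Lemma closed_feasible_below c : closed (feasible_below c).
Proof.
have -> : feasible_below c =
    (\bigcap_(B in [set B | in_scrB A B])
       [set v | h p X B <= \sum_(j in B) v ord0 j] `&`
     [set v | \sum_j v ord0 j <= c])%classic.
  by apply/seteqP; split => v [feas vc]; split => // B /feas; rewrite /SW subr_ge0.
apply: closedI; first apply: closed_bigI => B _.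
  refine (preimage_closed (f := fun v : 'rV[R]_m => \sum_(j in B) v ord0 j)
            (D := [set x | h p X B <= x]%classic) _ (@closed_ge R _)) => v _.
  exact: continuous_row_sum.
refine (preimage_closed (f := fun v : 'rV[R]_m => \sum_j v ord0 j)
          (D := [set x | x <= c]%classic) _ (@closed_le R c)) => v _.
exact: continuous_row_sum.
Qed.

Hypotheses (m_ge2 : (2 <= m)%N) (A_ge2 : (2 <= #|A|)%N).

Lemma partition_values_neq0 : (partition_values !=set0)%classic.
Proof.
have /card_gt0P[a aA] : (0 < #|A|)%N by apply: ltnW.
have /card_gt0P[b /setD1P[ba bA]] : (0 < #|A :\ a|)%N.
  by move: A_ge2; rewrite (cardsD1 a A) aA.
pose C (i : 'I_2) := if val i == 0%N then [set a] else ~: [set a].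
exists (Ipart p X C), 2%N, C; split => //; split.
- move=> [[|[|//]] ?] [[|[|//]] ?] //= _; rewrite /C /=.
    by rewrite finset.disjoints_subset finset.setCK.
  by rewrite disjoint_sym finset.disjoints_subset finset.setCK.
- apply/setP => x; rewrite inE; apply/bigcupP.
  have [xa|xa] := eqVneq x a; first by exists ord0; rewrite // inE xa.
  by exists (Ordinal (isT : (1 < 2)%N)); rewrite // !inE xa.
- move=> [[|[|//]] ?]; apply/set0Pn; rewrite /C /=.
    by exists a; rewrite !inE eqxx aA.
  by exists b; rewrite !inE ba bA.
Qed.

Lemma C_SK_le_I_A : C_SK p X A <= I_A p X A.
Proof.
apply: lb_le_inf; first exact: partition_values_neq0.
by move=> _ [k [C [k2 _ PC ->]]]; exact: C_SK_le_Ipart.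
Qed.

Lemma h_set1_le_rate (Rt : 'I_m -> R) j : in_scrR p X A Rt -> h p X [set j] <= Rt j.
Proof.
move=> feas; have := feas _ (in_scrB_set1 j m_ge2 A_ge2).
by rewrite /SW big_set1 subr_ge0.
Qed.

Lemma sum_rates_lbound : has_lbound sum_rates.
Proof.
exists (\sum_j h p X [set j]) => _ [Rt [feas ->]].
by apply: ler_sum => j _; exact: h_set1_le_rate.
Qed.

Lemma R_CO_le_sum_rates (Rt : 'I_m -> R) :
  in_scrR p X A Rt -> R_CO p X A <= \sum_j Rt j.
Proof. by move=> feas; apply: (ge_inf sum_rates_lbound); exists Rt. Qed.

Lemma Ipart_minimizer : exists k (C : 'I_k -> {set 'I_m}),
  [/\ (2 <= k)%N, (k <= #|A|)%N, in_scrP A C &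
      forall k' (C' : 'I_k' -> {set 'I_m}), (2 <= k')%N -> (k' <= #|A|)%N ->
        in_scrP A C' -> Ipart p X C <= Ipart p X C'].
Proof.
(* Bounding k by #|A| makes the partitions range over a finite type. *)
pose T := {k : 'I_#|A|.+1 & {ffun 'I_k -> {set 'I_m}}}.
pose P : pred T := fun t => (2 <= tag t)%N && `[< in_scrP A (tagged t) >].
have encode k (C : 'I_k -> {set 'I_m}) : (k <= #|A|)%N -> (2 <= k)%N ->
    in_scrP A C -> exists2 t : T, P t & Ipart p X (tagged t) = Ipart p X C.
  move=> kA k2 PC; have ffunCE : [ffun i => C i] =1 C by move=> i; rewrite ffunE.
  exists (Tagged (fun k : 'I_#|A|.+1 => {ffun 'I_k -> {set 'I_m}})
            (i := Ordinal (kA : (k < #|A|.+1)%N)) [ffun i => C i]).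
    by rewrite /P /= k2; apply/asboolP; rewrite (funext ffunCE).
  by rewrite /= (funext ffunCE).
have [_ [k0 [C0 [k20 kA0 PC0 _]]]] := partition_values_neq0.
have [t0 Pt0 _] := encode _ _ kA0 k20 PC0.
case: (arg_minP (fun t : T => Ipart p X (tagged t)) Pt0) => t /andP[k2 /asboolP PC] t_min.
exists (tag t), (tagged t); split => //; first by rewrite -ltnS.
move=> k' C' k2' kA' PC'; have [t' Pt' <-] := encode _ _ kA' k2' PC'.
exact: t_min.
Qed.

Lemma I_A_attained : exists k (C : 'I_k -> {set 'I_m}),
  [/\ (2 <= k)%N, (k <= #|A|)%N, in_scrP A C & I_A p X A = Ipart p X C].
Proof.
have [k [C [k2 kA PC C_min]]] := Ipart_minimizer.
exists k, C; split => //; apply/le_anti; rewrite I_A_le_Ipart //=.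
apply: lb_le_inf; first exact: partition_values_neq0.
by move=> _ [k' [C' [k2' kA' PC' ->]]]; exact: C_min.
Qed.

Lemma compact_feasible_below c : compact (feasible_below c).
Proof.
pose lo j := h p X [set j]; pose hi j := c - \sum_(l | l != j) lo l.
have box_compact := @rV_compact R m (fun j => `[lo j, hi j]%classic)
  (fun j => @segment_compact R (lo j) (hi j)).
apply: subclosed_compact (@closed_feasible_below c) box_compact _.
move=> v [feas vc] j /=; rewrite in_itv /= h_set1_le_rate //=.
have : \sum_(l | l != j) lo l <= \sum_(l | l != j) v ord0 l.
  by apply: ler_sum => l _; exact: h_set1_le_rate.
by move: vc; rewrite (bigD1 j) //= /hi; lra.
Qed.

Lemma R_CO_attained : exists Rt : 'I_m -> R,
  in_scrR p X A Rt /\ \sum_j Rt j = R_CO p X A.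
Proof.
have [_ [Rt0 [feas0 ->]] Rt0_lt] :=
  inf_adherent ltr01 (conj sum_rates_neq0 sum_rates_lbound).
set c := R_CO p X A + 1.
have [v /set_mem [feas vc] v_min] := compact_EVT_min
  (ex_intro _ _ (row_feasible_below feas0 (ltW Rt0_lt)))
  (@compact_feasible_below c) (continuous_subspaceT (continuous_row_sum predT)).
exists (fun j => v ord0 j); split => //; apply/le_anti.
rewrite R_CO_le_sum_rates // andbT; apply: lb_le_inf; first exact: sum_rates_neq0.
move=> _ [Rt [feas' ->]]; have [Rt_le|Rt_gt] := leP (\sum_j Rt j) c.
  have := v_min _ (mem_set (row_feasible_below feas' Rt_le)).
  by under [in X in _ <= X -> _]eq_bigr do rewrite mxE.
exact: le_trans vc (ltW Rt_gt).
Qed.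

End SecretKeyCapacity.

Theorem proposition1 (R : realType) (m : nat) (Omega : finType) (p : Omega -> R)
  (Alph : 'I_m -> finType) (X : forall i : 'I_m, Omega -> Alph i)
  (A : {set 'I_m}) :
  (2 <= m)%N ->
  (forall w, 0 <= p w) -> \sum_(w : Omega) p w = 1 ->
  (2 <= #|A|)%N ->
  (C_SK p X A = I_A p X A <->
   exists (k : nat) (C : 'I_k -> {set 'I_m}) (Rt : 'I_m -> R),
     [/\ (2 <= k)%N, (k <= #|A|)%N, in_scrP A C, in_scrR p X A Rt
       & forall i : 'I_k, SW p X Rt (~: C i) = 0]).
Proof.
move=> m2 _ _ A2; split => [CSK_IA | [k [C [Rt [k2 kA PC feas SW0]]]]].
  have [k [C [k2 kA PC IA_C]]] := I_A_attained p X A2.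
  have [Rt [feas Rt_opt]] := R_CO_attained p X m2 A2.
  exists k, C, Rt; split => //.
  have : \sum_(i < k) SW p X Rt (~: C i) = 0.
    rewrite (sum_SW_setC p X Rt k2 PC) Rt_opt -IA_C -CSK_IA /C_SK.
    by rewrite addrA subrK subrr mulr0.
  by move/psumr_eq0P => SW0 i; apply: SW0 => // j _; apply/feas/in_scrB_setC_block.
apply/le_anti; rewrite (C_SK_le_I_A p X A2) //=.
rewrite (le_trans (I_A_le_Ipart p X k2 kA PC)) // /C_SK.
have := R_CO_le_sum_rates m2 A2 feas; rewrite (sum_rates_tight k2 PC SW0); lra.
Qed.
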